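(* Let $(M,g)$ be a Riemannian manifold of dimension $n$, with $\mathcal{T}M$, $V$, $G$, $\xi_1,\xi_2$, $\omega^1,\omega^2$, $f$ as in the context (on the open set where $F^2+K^2>0$). Let $V_{\xi_2}=\{X\in V:\ \omega^2(X)=0\}$, $\overline{G}=G|_{V_{\xi_2}}$, $\overline{f}=f|_{V_{\xi_2}}$ (an endomorphism of $V_{\xi_2}$) and $\overline{\eta}=\omega^1|_{V_{\xi_2}}$. Then for all sections $X,Y$ of $V_{\xi_2}$, $$\overline{G}(\overline{f}(X),\overline{f}(Y))=\overline{G}(X,Y)-\overline{\eta}(X)\overline{\eta}(Y).$$
   Context: Let $M$ be an $n$-dimensional smooth manifold with a Riemannian metric $g=(g_{ij})$, with inverse matrix $(g^{ij})$; summation convention is used. The big-tangent manifold $\mathcal{T}M$ is the total space of $TM\oplus T^*M\to M$; over a chart $(U,(x^i))$ it has coordinates $(x^i,y^i,p_i)$, the point being $y^i\frac{\partial}{\partial x^i}|_x+p_i\,dx^i|_x$. The vertical bundle $V\subset T\mathcal{T}M$ is tangent to the fibres of $\mathcal{T}M\to M$, locally spanned by $\{\frac{\partial}{\partial y^i},\frac{\partial}{\partial p_i}\}$. Put $y_i=g_{ij}y^j$, $p^i=g^{ij}p_j$, $F^2=g_{ij}y^iy^j$, $K^2=g^{ij}p_ip_j$; all objects are considered where $F^2+K^2>0$. $G$ is the metric on $V$ with $G(\frac{\partial}{\partial y^i},\frac{\partial}{\partial y^j})=g_{ij}$, $G(\frac{\partial}{\partial p_i},\frac{\partial}{\partial p_j})=g^{ij}$,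 $G(\frac{\partial}{\partial y^i},\frac{\partial}{\partial p_j})=0$. $\phi:V\to V$ is given by $\phi(\frac{\partial}{\partial y^i})=-g_{ij}\frac{\partial}{\partial p_j}$, $\phi(\frac{\partial}{\partial p_i})=g^{ij}\frac{\partial}{\partial y^j}$. $\xi_2=\frac{1}{\sqrt{F^2+K^2}}(y^i\frac{\partial}{\partial y^i}+p_i\frac{\partial}{\partial p_i})$, $\xi_1=\frac{1}{\sqrt{F^2+K^2}}(p^i\frac{\partial}{\partial y^i}-y_i\frac{\partial}{\partial p_i})$. $\omega^1,\omega^2\in\Gamma(V^* )$: $\omega^1(\frac{\partial}{\partial y^i})=\frac{p_i}{\sqrt{F^2+K^2}}$, $\omega^1(\frac{\partial}{\partial p_i})=-\frac{y^i}{\sqrt{F^2+K^2}}$, $\omega^2(\frac{\partial}{\partial y^i})=\frac{y_i}{\sqrt{F^2+K^2}}$, $\omega^2(\frac{\partial}{\partial p_i})=\frac{p^i}{\sqrt{F^2+K^2}}$. $f:V\to V$, $f(X)=\phi(X)-\omega^2(X)\xi_1+\omega^1(X)\xi_2$. *)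

(* Pointwise (fibrewise) linear-algebra model of the vertical
   bundle V of the big-tangent manifold over a chart. *)
From HB Require Import structures.
From mathcomp Require Import all_boot all_order all_algebra.
Set Implicit Arguments. Unset Strict Implicit. Unset Printing Implicit Defensive.
Import Order.TTheory GRing.Theory Num.Theory.
Local Open Scope ring_scope.

Definition sc (R : rcfType) (n : nat) (u v : 'rV[R]_n) (A : 'M[R]_n) : R :=
  (u *m A *m v^T) 0 0.

(* A vertical vector X = a^i d/dy^i + b_i d/dp_i is the pair (a, b). *)
Definition Vvec (R : rcfType) (n : nat) := ('rV[R]_n * 'rV[R]_n)%type.

Definition vadd (R : rcfType) (n : nat) (X Y : Vvec R n) : Vvec R n :=
  (X.1 + Y.1, X.2 + Y.2).
Definition vscale (R : rcfType) (n : nat) (c : R) (X : Vvec R n) : Vvec R n :=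
  (c *: X.1, c *: X.2).

Definition Gm (R : rcfType) (n : nat) (g : 'M[R]_n) (X Y : Vvec R n) : R :=
  sc X.1 Y.1 g + sc X.2 Y.2 (invmx g).

Definition F2 (R : rcfType) (n : nat) (g : 'M[R]_n) (y : 'rV[R]_n) : R := sc y y g.
Definition K2 (R : rcfType) (n : nat) (g : 'M[R]_n) (p : 'rV[R]_n) : R :=
  sc p p (invmx g).
Definition nrm (R : rcfType) (n : nat) (g : 'M[R]_n) (y p : 'rV[R]_n) : R :=
  Num.sqrt (F2 g y + K2 g p).

(* phi(d/dy^i) = - g_ij d/dp_j,  phi(d/dp_i) = g^ij d/dy^j *)
Definition phi (R : rcfType) (n : nat) (g : 'M[R]_n) (X : Vvec R n) : Vvec R n :=
  (X.2 *m invmx g, - (X.1 *m g)).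

(* xi_2 = (y^i d/dy^i + p_i d/dp_i)/S,  xi_1 = (p^i d/dy^i - y_i d/dp_i)/S *)
Definition xi2 (R : rcfType) (n : nat) (g : 'M[R]_n) (y p : 'rV[R]_n) : Vvec R n :=
  ((nrm g y p)^-1 *: y, (nrm g y p)^-1 *: p).
Definition xi1 (R : rcfType) (n : nat) (g : 'M[R]_n) (y p : 'rV[R]_n) : Vvec R n :=
  ((nrm g y p)^-1 *: (p *m invmx g), (nrm g y p)^-1 *: - (y *m g)).

(* omega^1(X) = (a^i p_i - b_i y^i)/S,  omega^2(X) = (a^i y_i + b_i p^i)/S *)
Definition omega1 (R : rcfType) (n : nat) (g : 'M[R]_n) (y p : 'rV[R]_n)
  (X : Vvec R n) : R :=
  (nrm g y p)^-1 * ((X.1 *m p^T) 0 0 - (X.2 *m y^T) 0 0).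
Definition omega2 (R : rcfType) (n : nat) (g : 'M[R]_n) (y p : 'rV[R]_n)
  (X : Vvec R n) : R :=
  (nrm g y p)^-1 * ((X.1 *m (y *m g)^T) 0 0 + (X.2 *m (p *m invmx g)^T) 0 0).

Definition fV (R : rcfType) (n : nat) (g : 'M[R]_n) (y p : 'rV[R]_n)
  (X : Vvec R n) : Vvec R n :=
  vadd (vadd (phi g X) (vscale (- omega2 g y p X) (xi1 g y p)))
       (vscale (omega1 g y p X) (xi2 g y p)).

(** Pointwise, [phi] is a [G]-isometry, [(xi1, xi2)] is [G]-orthonormal,
    [G(phi X, xi1) = omega2 X] and [G(phi X, xi2) = - omega1 X].  Expanding
    [G(f X, f Y)] bilinearly then gives the metric f-structure identity
    [G(f X, f Y) = G(X, Y) - omega1 X omega1 Y - omega2 X omega2 Y],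
    whose restriction to [omega2 = 0] is the theorem. *)
From HB Require Import structures.
From mathcomp Require Import all_boot all_order all_algebra.
From mathcomp Require Import ring.
Import Order.TTheory GRing.Theory Num.Theory.
Local Open Scope ring_scope.

Section BilinearForm.
Variables (R : rcfType) (n : nat).
Implicit Types (u v : 'rV[R]_n) (M A : 'M[R]_n).

Lemma scDl u1 u2 v M : sc (u1 + u2) v M = sc u1 v M + sc u2 v M.
Proof. by rewrite /sc !mulmxDl [LHS]mxE. Qed.

Lemma scZl c u v M : sc (c *: u) v M = c * sc u v M.
Proof. by rewrite /sc -!scalemxAl [LHS]mxE. Qed.

Lemma scZr c u v M : sc u (c *: v) M = c * sc u v M.
Proof. by rewrite /sc linearZ /= -scalemxAr [LHS]mxE. Qed.

Lemma scNl u v M : sc (- u) v M = - sc u v M.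
Proof. by rewrite /sc !mulNmx [LHS]mxE. Qed.

Lemma scNr u v M : sc u (- v) M = - sc u v M.
Proof. by rewrite /sc linearN /= mulmxN [LHS]mxE. Qed.

Lemma scMl u v A M : sc (u *m A) v M = sc u v (A *m M).
Proof. by rewrite /sc ?mulmxA. Qed.

Lemma scMr u v A M : sc u (v *m A) M = sc u v (M *m A^T).
Proof. by rewrite /sc trmx_mul ?mulmxA. Qed.

Lemma scC u v M : sc u v M = sc v u M^T.
Proof.
have trmx11 (B : 'M[R]_1) : B 0 0 = B^T 0 0 by rewrite mxE.
by rewrite /sc trmx11 !trmx_mul trmxK mulmxA.
Qed.

Lemma sc1 u v : (u *m v^T) 0 0 = sc u v 1%:M.
Proof. by rewrite /sc mulmx1. Qed.

Lemma posdef_unitmx M : (forall v, v != 0 -> 0 < sc v v M) -> M \in unitmx.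
Proof.
move=> Mpos; rewrite unitmxE unitfE; apply/negP => /det0P [v v0 vM].
by have := Mpos v v0; rewrite /sc vM mul0mx mxE ltxx.
Qed.

End BilinearForm.

Section VerticalMetric.
Variables (R : rcfType) (n : nat) (g : 'M[R]_n).
Hypotheses (g_sym : g^T = g) (g_unit : g \in unitmx).
Implicit Types (X Y Z : Vvec R n).

Let invg_sym : (invmx g)^T = invmx g.
Proof. by rewrite trmx_inv g_sym. Qed.

Let invgg : invmx g *m g = 1%:M. Proof. exact: mulVmx. Qed.
Let ginvg : g *m invmx g = 1%:M. Proof. exact: mulmxV. Qed.

Lemma GmC X Y : Gm g X Y = Gm g Y X.
Proof. by rewrite /Gm scC g_sym [sc X.2 _ _]scC invg_sym. Qed.

Lemma GmDl X Y Z : Gm g (vadd X Y) Z = Gm g X Z + Gm g Y Z.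
Proof. by rewrite /Gm /= !scDl addrACA. Qed.

Lemma GmZl c X Y : Gm g (vscale c X) Y = c * Gm g X Y.
Proof. by rewrite /Gm /= !scZl mulrDr. Qed.

Lemma GmDr X Y Z : Gm g X (vadd Y Z) = Gm g X Y + Gm g X Z.
Proof. by rewrite GmC GmDl !(GmC X). Qed.

Lemma GmZr c X Y : Gm g X (vscale c Y) = c * Gm g X Y.
Proof. by rewrite GmC GmZl GmC. Qed.

Lemma Gm_phi X Y : Gm g (phi g X) (phi g Y) = Gm g X Y.
Proof.
rewrite /Gm /= scNl scNr opprK !(scMl, scMr) invg_sym g_sym ?mulmxA.
by rewrite invgg ginvg !mul1mx addrC.
Qed.

Variables (y p : 'rV[R]_n).
Hypothesis yp_pos : 0 < F2 g y + K2 g p.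

Lemma invnrm_sqrK :
  (nrm g y p)^-1 * (nrm g y p)^-1 * (sc y y g + sc p p (invmx g)) = 1.
Proof.
have nrm_sqr : nrm g y p ^+ 2 = sc y y g + sc p p (invmx g).
  by rewrite /nrm sqr_sqrtr // ltW.
have nrm_neq0 : nrm g y p != 0 by rewrite -sqrf_eq0 nrm_sqr gt_eqF.
by rewrite -nrm_sqr; field.
Qed.

Lemma Gm_xi1 : Gm g (xi1 g y p) (xi1 g y p) = 1.
Proof.
rewrite /Gm /= !(scZl, scZr, scNl, scNr) opprK !(scMl, scMr).
rewrite invg_sym g_sym ?mulmxA invgg ginvg !mul1mx.
by rewrite -[RHS]invnrm_sqrK; ring.
Qed.

Lemma Gm_xi2 : Gm g (xi2 g y p) (xi2 g y p) = 1.
Proof. by rewrite /Gm /= !(scZl, scZr) -[RHS]invnrm_sqrK; ring. Qed.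

Lemma Gm_xi1_xi2 : Gm g (xi1 g y p) (xi2 g y p) = 0.
Proof.
rewrite /Gm /= !(scZl, scZr, scNl) !scMl invgg ginvg [sc p _ _]scC trmx1.
by ring.
Qed.

Lemma Gm_phi_xi1 X : Gm g (phi g X) (xi1 g y p) = omega2 g y p X.
Proof.
rewrite /Gm /omega2 /= !(scZr, scNl, scNr) opprK !sc1 !(scMl, scMr).
by rewrite invg_sym g_sym ?mulmxA invgg ginvg ?mul1mx ?mulmx1; ring.
Qed.

Lemma Gm_phi_xi2 X : Gm g (phi g X) (xi2 g y p) = - omega1 g y p X.
Proof.
rewrite /Gm /omega1 /= !(scZr, scNl) !sc1 !scMl invgg ginvg.
by ring.
Qed.

Lemma Gm_fV X Y :
  Gm g (fV g y p X) (fV g y p Y) =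
  Gm g X Y - omega1 g y p X * omega1 g y p Y - omega2 g y p X * omega2 g y p Y.
Proof.
rewrite /fV !(GmDl, GmDr, GmZl, GmZr) Gm_phi Gm_xi1 Gm_xi2 Gm_xi1_xi2.
rewrite ![Gm g (xi1 _ _ _) _]GmC ![Gm g (xi2 _ _ _) _]GmC Gm_xi1_xi2.
by rewrite !(Gm_phi_xi1, Gm_phi_xi2); ring.
Qed.

End VerticalMetric.

Theorem theorem5p5 (R : rcfType) (n : nat) (g : 'M[R]_n) (y p : 'rV[R]_n) :
  g^T = g ->
  (forall v : 'rV[R]_n, v != 0 -> 0 < sc v v g) ->
  0 < F2 g y + K2 g p ->
  forall X Y : Vvec R n,
    omega2 g y p X = 0 -> omega2 g y p Y = 0 ->
    Gm g (fV g y p X) (fV g y p Y) = Gm g X Y - omega1 g y p X * omega1 g y p Y.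
Proof.
move=> g_sym g_pos yp_pos X Y hX hY.
by rewrite Gm_fV // ?posdef_unitmx // hX mul0r subr0.
Qed.
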